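(* Let $n\geq 3$ be an integer and $p$ a prime with $\gcd(n,p(p-1))=1$. (1) Let $F(x,y)=ax^n+by^n$ with $a,b$ integers, $ab\neq 0$, and $\nu_p(a)\equiv\nu_p(b)\pmod n$. Then $R(F)$ is dense in $\mathbb{Q}_p$. (2) Let $r\geq 2$ and $F(x_1,\ldots,x_r)=a_1x_1^n+a_2x_2^n+\cdots+a_rx_r^n$ with $a_1,\ldots,a_r$ integers, $a_1a_2\cdots a_r\neq 0$, such that $\nu_p(a_i)\equiv\nu_p(a_j)\pmod n$ for some $1\leq i<j\leq r$. Then $R(F)$ is dense in $\mathbb{Q}_p$.
   Context: For an integral form $F$ in $r$ variables, $R(F)=\{F(\overline{x})/F(\overline{y}):\overline{x},\overline{y}\in\mathbb{Z}^r,\ F(\overline{y})\neq 0\}$, viewed as a subset of the field $\mathbb{Q}_p$ of $p$-adic numbers with its $p$-adic topology. $\nu_p$ denotes the $p$-adic valuation. *)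

From mathcomp Require Import all_boot all_order all_algebra.
Set Implicit Arguments. Unset Strict Implicit. Unset Printing Implicit Defensive.
Import Order.TTheory GRing.Theory Num.Theory.
Local Open Scope ring_scope.

(* p-adic valuation of a rational number (nu_p(0) := 0 by convention;
   it is only used on nonzero arguments below). *)
Definition padic_val (p : nat) (q : rat) : int :=
  (logn p `|numq q|%N)%:Z - (logn p `|denq q|%N)%:Z.

Definition zval (p : nat) (a : int) : nat := logn p `|a|%N.

Definition ratio_set (r : nat) (F : ('I_r -> int) -> int) : rat -> Prop :=
  fun s => exists (x y : 'I_r -> int), F y != 0 /\ s = (F x)%:~R / (F y)%:~R.

(* Since Q is dense in Q_p, this is
   equivalent to: every rational q is a p-adic limit of elements of S, i.e.
   for each q and each k there is s in S with s = q or nu_p(s - q) >= k. *)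
Definition dense_in_Qp (p : nat) (S : rat -> Prop) : Prop :=
  forall (q : rat) (k : int), exists s, S s /\ (s = q \/ k <= padic_val p (s - q)).

Definition diag_form (r n : nat) (a : 'I_r -> int) (x : 'I_r -> int) : int :=
  \sum_(i < r) a i * x i ^+ n.

Definition binary_form (n : nat) (a b : int) (x : 'I_2 -> int) : int :=
  a * x ord0 ^+ n + b * x ord_max ^+ n.

From mathcomp Require Import all_boot all_order all_algebra.
From mathcomp Require Import cyclic zify ring.
Set Implicit Arguments. Unset Strict Implicit. Unset Printing Implicit Defensive.
Import Order.TTheory GRing.Theory Num.Theory.
Local Open Scope ring_scope.

(* Write a = a' p^al and b = b' p^(al + n m) with a', b' prime to p, and let
   w p^c be the denominator of q, with w prime to p.  For x = (p^m Z, 1) and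
   y = (p^(m+c+1), 0), clearing denominators gives
     F(x)/F(y) - q = p^(al+nm+c) (w a' Z^n - V) / (a' w p^(al+n(m+c+1)+c))
   where V = numq(q) a' p^t - w b' with t > 0, so V is prime to p.  As n is
   prime to p (p - 1), hence to the order of (Z/p^L)^*, every unit mod p^L is
   an n-th power, so Z can be chosen with w a' Z^n = V mod p^L for any L.
   Diagonal forms reduce to the binary case by zeroing the other variables. *)

Lemma PoszX (m k : nat) : (m ^ k)%N%:Z = m%:Z ^+ k.
Proof. by rewrite -natz natrX natz. Qed.

Lemma expz_totient_mod (h M : int) : coprimez h M ->
  (h ^+ totient `|M| = 1 %[mod M])%Z.
Proof.
move=> hM; have [->|M0] := eqVneq M 0; first by rewrite expr0.
have r_ge0 : 0 <= (h %% M)%Z by exact: modz_ge0.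
have r_cop : coprime `|(h %% M)%Z| `|M| by rewrite -coprimezE /coprimez gcdz_modl.
rewrite -modzXm -(gez0_abs r_ge0) -modz_abs -PoszX modz_nat.
by rewrite Euler_exp_totient // -modz_nat modz_abs.
Qed.

Lemma exists_root_modz (n : nat) (h M : int) : (0 < n)%N ->
  coprime n (totient `|M|) -> coprimez h M ->
  exists Z : int, (Z ^+ n = h %[mod M])%Z.
Proof.
move=> n_gt0 n_cop hM.
(* Take Z = h^e where e n = 1 mod totient M. *)
have [e t] := egcdnP (totient `|M|) n_gt0; rewrite (eqP n_cop) => een _.
exists (h ^+ e); rewrite -exprM een exprD expr1 mulnC exprM.
by rewrite -modzMml -modzXm expz_totient_mod // modzXm expr1n modzMml mul1r.
Qed.

Lemma exists_mul_root_modz (n : nat) (c v M : int) : (0 < n)%N -> M != 0 ->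
  coprime n (totient `|M|) -> coprimez c M -> coprimez v M ->
  exists Z : int, (c * Z ^+ n = v %[mod M])%Z.
Proof.
move=> n_gt0 M0 n_cop cM vM.
have phi_gt0 : (0 < totient `|M|)%N by rewrite totient_gt0 absz_gt0.
have hM : coprimez (v * c ^+ (totient `|M|).-1) M by rewrite coprimezMl vM coprimezXl.
have [Z HZ] := exists_root_modz n_gt0 n_cop hM.
exists Z; rewrite -modzMmr HZ modzMmr mulrCA -exprS prednK //.
by rewrite -modzMmr expz_totient_mod // modzMmr mulr1.
Qed.

Lemma coprimez_mulXB (x y P : int) (t : nat) : (0 < t)%N ->
  coprimez (x * P ^+ t - y) P = coprimez y P.
Proof.
by case: t => // t _; rewrite exprSr mulrA /coprimez gcdzC gcdzMDl gcdzN gcdzC.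
Qed.

Lemma padic_val_ratio (p : nat) (m d : int) : m != 0 -> d != 0 ->
  padic_val p (m%:~R / d%:~R) = (zval p m)%:Z - (zval p d)%:Z.
Proof.
move=> m0 d0; set r : rat := _ / _.
have r0 : r != 0 by rewrite mulf_neq0 ?invr_eq0 ?intr_eq0.
have e : numq r * d = m * denq r.
  by apply: (@intr_inj rat); rewrite !rmorphM /= numqE /r; field; rewrite intr_eq0.
have := congr1 (fun z => logn p `|z|) e => /=.
rewrite !abszM !lognM ?absz_gt0 ?numq_eq0 ?denq_neq0 // /padic_val /zval; lia.
Qed.

Section PrimeValuation.

Variable p : nat.
Hypothesis p_prime : prime p.

Lemma coprimez_neq0 (u : int) : coprimez u p -> u != 0.
Proof.
apply: contraTneq => ->; rewrite /coprimez gcd0z eqz_nat.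
by rewrite neq_ltn prime_gt1 ?orbT.
Qed.

Lemma zval_coprimeMX (u : int) (j : nat) : coprimez u p -> zval p (u * p%:Z ^+ j) = j.
Proof.
move=> up; have u0 := coprimez_neq0 up.
rewrite /zval abszM abszX lognM ?absz_gt0 ?expn_gt0 ?prime_gt0 //.
by rewrite logn_coprime 1?coprime_sym // lognX logn_prime // eqxx muln1.
Qed.

Lemma zval_decomp (a : int) : a != 0 ->
  exists2 a' : int, coprimez a' p & a = a' * p%:Z ^+ zval p a.
Proof.
move=> a0; have a_gt0 : (0 < `|a|)%N by rewrite absz_gt0.
have [m pm am] := pfactor_coprime p_prime a_gt0.
exists ((-1) ^+ (a < 0)%R * m%:Z).
  by rewrite coprimezE abszM abszX /= exp1n mul1n coprime_sym.
by rewrite {1}(intEsign a) {1}am -mulrA PoszM PoszX.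
Qed.

Lemma zval_geq_dvdz (D : int) (j : nat) : D != 0 -> (p%:Z ^+ j %| D)%Z -> (j <= zval p D)%N.
Proof. by move=> D0; rewrite dvdzE abszX pfactor_dvdn // absz_gt0. Qed.

Lemma padic_val_ratio_ge (D u : int) (e j : nat) : D != 0 -> coprimez u p ->
  (p%:Z ^+ (e + j) %| D)%Z -> j%:Z <= padic_val p (D%:~R / (u * p%:Z ^+ e)%:~R).
Proof.
move=> D0 up /(zval_geq_dvdz D0) Dj.
have p0 : p%:Z != 0 by rewrite eqz_nat gtn_eqF ?prime_gt0.
rewrite padic_val_ratio ?zval_coprimeMX ?mulf_neq0 ?expf_neq0 ?(coprimez_neq0 up) //.
lia.
Qed.

Lemma coprime_totient_pfactor (n L : nat) :
  coprime n p -> coprime n p.-1 -> coprime n (totient (p ^ L)).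
Proof.
case: L => [|L] np np1; first by rewrite coprimen1.
by rewrite totient_pfactor // coprimeMr np1 coprimeXr.
Qed.

End PrimeValuation.

Lemma intr_div_subq (x y : int) (q : rat) : y != 0 ->
  x%:~R / y%:~R - q = (x * denq q - numq q * y)%:~R / (y * denq q)%:~R.
Proof.
move=> y0; rewrite -{1}(divq_num_den q) rmorphB !rmorphM /=.
by field; rewrite !intr_eq0 y0 denq_neq0.
Qed.

Definition vec2 (X Y : int) : 'I_2 -> int := fun i => if i == ord0 then X else Y.

Lemma binary_form_vec2 (n : nat) (a b X Y : int) :
  binary_form n a b (vec2 X Y) = a * X ^+ n + b * Y ^+ n.
Proof. by []. Qed.

Lemma binary_form_vec2_0 (n : nat) (a b X : int) : (0 < n)%N ->
  binary_form n a b (vec2 X 0) = a * X ^+ n.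
Proof. by move=> n_gt0; rewrite binary_form_vec2 expr0n gtn_eqF // mulr0 addr0. Qed.

Lemma binary_form_cross_difference (n al m c : nat) (P a' b' u w Z : int) : (0 < n)%N ->
  let F := binary_form n (a' * P ^+ al) (b' * P ^+ (al + n * m)) in
  F (vec2 (P ^+ m * Z) 1) * (w * P ^+ c) - u * F (vec2 (P ^+ (m + c.+1)) 0)
  = P ^+ (al + n * m + c) * (w * a' * Z ^+ n - (u * a' * P ^+ (n.-1 * c + n) - w * b')).
Proof.
move=> n_gt0 F; rewrite {}/F binary_form_vec2_0 // binary_form_vec2 expr1n mulr1.
rewrite !exprMn -!exprM.
have -> : ((m + c.+1) * n = m * n + c + (n.-1 * c + n))%N.
  by case: n n_gt0 => // n' _; rewrite /=; lia.
rewrite (mulnC m n) !exprD; ring.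
Qed.

Lemma binary_form_ratio_dense_le (p n : nat) (a b : int) :
  prime p -> (0 < n)%N -> coprime n p -> coprime n p.-1 -> a != 0 -> b != 0 ->
  (zval p a <= zval p b)%N -> zval p a = zval p b %[mod n] ->
  dense_in_Qp p (ratio_set (binary_form n a b)).
Proof.
move=> p_prime n_gt0 np np1 a0 b0 ab abn q k.
have [m bm] : exists m, zval p b = (zval p a + n * m)%N.
  by move/eqP: abn; rewrite eq_sym eqn_mod_dvd // => /dvdnP [m hm]; exists m; lia.
have [a' a'p aE] := zval_decomp p_prime a0.
have [b' b'p bE] := zval_decomp p_prime b0.
have [w wp wE] := zval_decomp p_prime (denq_neq0 q).
set al := zval p a in aE bm *; set c := zval p (denq q) in wE *.
set P := p%:Z in aE bE wE *.
have P0 : P != 0 by rewrite eqz_nat gtn_eqF ?prime_gt0.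
pose L := (n * c.+1 + `|k|)%N.
pose V := numq q * a' * P ^+ (n.-1 * c + n) - w * b'.
have Vp : coprimez V p by rewrite coprimez_mulXB ?addn_gt0 ?n_gt0 ?orbT // coprimezMl wp.
have [Z HZ] : exists Z, (w * a' * Z ^+ n = V %[mod P ^+ L])%Z.
  apply: exists_mul_root_modz => //.
  - exact: expf_neq0.
  - by rewrite abszX coprime_totient_pfactor.
  - by rewrite coprimezXr // coprimezMl wp.
  - exact: coprimezXr.
pose F := binary_form n a b.
pose x := vec2 (P ^+ m * Z) 1; pose y := vec2 (P ^+ (m + c.+1)) 0.
have FyE : F y * denq q = (a' * w) * P ^+ (al + n * (m + c.+1) + c).
  by rewrite /F /y binary_form_vec2_0 // aE wE -exprM mulnC !exprD; ring.
have Fy0 : F y != 0 by rewrite /F /y binary_form_vec2_0 // mulf_neq0 ?expf_neq0.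
pose D := F x * denq q - numq q * F y.
have DE : D = P ^+ (al + n * m + c) * (w * a' * Z ^+ n - V).
  by rewrite /D /F aE bE bm wE binary_form_cross_difference.
exists ((F x)%:~R / (F y)%:~R); split; first by exists x, y.
rewrite intr_div_subq // -/D FyE.
have [D0|D0] := eqVneq D 0.
  by left; apply/eqP; rewrite -subr_eq0 intr_div_subq // -/D D0 mul0r.
have a'wp : coprimez (a' * w) p by rewrite coprimezMl a'p.
have Ddvd : (P ^+ (al + n * (m + c.+1) + c + `|k|) %| D)%Z.
  have -> : (al + n * (m + c.+1) + c + `|k| = al + n * m + c + L)%N.
    by rewrite /L; ring.
  by rewrite DE (exprD _ _ L); apply: dvdz_mul => //; rewrite -eqz_mod_dvd; apply/eqP.
right; apply: le_trans _ (padic_val_ratio_ge p_prime D0 a'wp Ddvd).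
by rewrite abszE ler_norm.
Qed.

Lemma dense_in_Qp_sub (p : nat) (S T : rat -> Prop) :
  (forall s, S s -> T s) -> dense_in_Qp p S -> dense_in_Qp p T.
Proof. by move=> ST dS q k; have [s [/ST Ts hs]] := dS q k; exists s. Qed.

Lemma ratio_set_binary_formC (n : nat) (a b : int) (s : rat) :
  ratio_set (binary_form n a b) s -> ratio_set (binary_form n b a) s.
Proof.
move=> [x [y [y0 ->]]].
exists (vec2 (x ord_max) (x ord0)), (vec2 (y ord_max) (y ord0)).
by rewrite !binary_form_vec2 ![b * _ + _]addrC.
Qed.

Lemma binary_form_ratio_dense (p n : nat) (a b : int) :
  prime p -> (0 < n)%N -> coprime n p -> coprime n p.-1 -> a != 0 -> b != 0 ->
  zval p a = zval p b %[mod n] -> dense_in_Qp p (ratio_set (binary_form n a b)).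
Proof.
move=> p_prime n_gt0 np np1 a0 b0 abn.
have [ab|/ltnW ba] := leqP (zval p a) (zval p b).
  exact: binary_form_ratio_dense_le.
apply: dense_in_Qp_sub (@ratio_set_binary_formC n b a) _.
exact: binary_form_ratio_dense_le.
Qed.

Lemma diag_form_pair (r n : nat) (a : 'I_r -> int) (i j : 'I_r) (X Y : int) :
  (0 < n)%N -> i != j ->
  diag_form n a (fun l => if l == i then X else if l == j then Y else 0)
  = a i * X ^+ n + a j * Y ^+ n.
Proof.
move=> n_gt0 ij; rewrite /diag_form (bigD1 i) //= eqxx (bigD1 j) 1?eq_sym //=.
rewrite (negbTE ij) eqxx big1 ?addr0 // => l /andP [li lj].
by rewrite (negbTE li) (negbTE lj) expr0n gtn_eqF // mulr0.
Qed.

Lemma ratio_set_diag_form_pair (r n : nat) (a : 'I_r -> int) (i j : 'I_r) :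
  (0 < n)%N -> i != j -> forall s : rat,
  ratio_set (binary_form n (a i) (a j)) s -> ratio_set (diag_form n a) s.
Proof.
move=> n_gt0 ij _ [x [y [y0 ->]]].
pose lift2 (z : 'I_2 -> int) l := if l == i then z ord0 else if l == j then z ord_max else 0.
by exists (lift2 x), (lift2 y); rewrite !diag_form_pair.
Qed.

Theorem corollary1p2 (n p : nat) :
  (3 <= n)%N -> prime p -> coprime n (p * (p - 1)) ->
  (forall a b : int, a * b != 0 ->
     zval p a = zval p b %[mod n] ->
     dense_in_Qp p (ratio_set (binary_form n a b)))
  /\
  (forall (r : nat) (a : 'I_r -> int), (2 <= r)%N ->
     (forall i, a i != 0) ->
     (exists i j : 'I_r, (i < j)%N /\ zval p (a i) = zval p (a j) %[mod n]) ->
     dense_in_Qp p (ratio_set (diag_form n a))).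
Proof.
move=> n_ge3 p_prime; rewrite coprimeMr subn1 => /andP [np np1].
have n_gt0 : (0 < n)%N by apply: leq_trans n_ge3.
split=> [a b | r a _ a0 [i [j [ij aij]]]].
  by rewrite mulf_eq0 negb_or => /andP [a0 b0]; exact: binary_form_ratio_dense.
have i_neq_j : i != j by rewrite neq_ltn ij.
apply: dense_in_Qp_sub (ratio_set_diag_form_pair n_gt0 i_neq_j) _.
exact: binary_form_ratio_dense.
Qed.
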